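(* Assume the Setting and consider Algorithm 1 with noisy data $y^\delta$ satisfying $\|y^\delta-y\|\le\delta$, $\delta>0$, where $\tau>1$ and $\mu_0>0$ satisfy $1-\frac{1+\eta}{\tau}-\eta-\frac{\mu_0}{4\sigma}>0$. Then the algorithm terminates after finitely many steps, i.e. there is a finite integer $n_\delta$ with $\|F(x_{n_\delta}^\delta)-y^\delta\|\le\tau\delta<\|F(x_n^\delta)-y^\delta\|$ for all $0\le n<n_\delta$.
   Context: Setting. Let $X,Y$ be real Hilbert spaces. Let $\mathcal R:X\to(-\infty,\infty]$ be proper, lower semicontinuous and strongly convex with constant $\sigma>0$, i.e. $\mathcal R(t\bar x+(1-t)x)+\sigma t(1-t)\|\bar x-x\|^2\le t\mathcal R(\bar x)+(1-t)\mathcal R(x)$ for all $\bar x,x\in\mathrm{dom}(\mathcal R)$ and $t\in[0,1]$. For $\xi\in\partial\mathcal R(x)$ (subdifferential) the Bregman distance is $D_{\mathcal R}^{\xi}(z,x)=\mathcal R(z)-\mathcal R(x)-\langle\xi,z-x\rangle$. The convex conjugate $\mathcal R^*$ is differentiable with $\|\nabla\mathcal R^*(\bar\xi)-\nabla\mathcal R^*(\xi)\|\le\|\bar\xi-\xi\|/(2\sigma)$, and $\nabla\mathcal R^*(\xi)=\arg\min_{x\in X}\{\mathcal R(x)-\langle\xi,x\rangle\}$ (unique minimizer), with $\xi\in\partial\mathcal R(\nabla\mathcal R^*(\xi))$. Let $F:\mathrm{dom}(F)\subset X\to Y$ and $y\in Y$. Assume: (b) there are $\rho>0$, $x_0\in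 X$, $\xi_0\in\partial\mathcal R(x_0)$ with $B_{2\rho}(x_0):=\{x:\|x-x_0\|\le 2\rho\}\subset\mathrm{dom}(F)$, and $F(x)=y$ has a solution $\bar x$ with $D_{\mathcal R}^{\xi_0}(\bar x,x_0)\le\sigma\rho^2$; (c) $F$ is weakly closed: if $x_n\in\mathrm{dom}(F)$, $x_n\rightharpoonup x$ and $F(x_n)\to v$, then $x\in\mathrm{dom}(F)$ and $F(x)=v$; (d) there are bounded linear operators $L(x):X\to Y$, $x\in B_{2\rho}(x_0)$, with $x\mapsto L(x)$ continuous on $B_{2\rho}(x_0)$, a constant $\eta\in[0,1)$ with $\|F(x)-F(\bar x)-L(\bar x)(x-\bar x)\|\le\eta\|F(x)-F(\bar x)\|$ for all $x,\bar x\in B_{2\rho}(x_0)$, and a constant $L>0$ with $\|L(x)\|\le L$ on $B_{2\rho}(x_0)$. Algorithm 1 (noisy data $y^\delta$ with $\|y^\delta-y\|\le\delta$, $\delta>0$). Parameters: $\tau>1$, $\beta\in(0,\infty]$, $\mu_0>0$, $\mu_1>0$, and a fixed choice of one of two step-size rules: (constant) $\alpha_n^\delta=\mu_0/L^2$, or (adaptive) $\alpha_n^\delta=\min\{\mu_0\|r_n^\delta\|^2/\|g_n^\delta\|^2,\mu_1\}$ (with $\mu_0\|r_n^\delta\|^2/\|g_n^\delta\|^2:=+\infty$ if $g_n^\delta=0$). Set $\xi_{-1}^\delta=\xi_0^\delta=\xi_0$, $x_0^\delta=x_0=\nabla\mathcal R^*(\xi_0)$. For $n\ge0$: (i) $r_n^\delta:=F(x_n^\delta)-y^\delta$;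 if $\|r_n^\delta\|\le\tau\delta$, stop and output $x_n^\delta$ (the stopping index is denoted $n_\delta$). (ii) $g_n^\delta:=L(x_n^\delta)^*r_n^\delta$ and $\alpha_n^\delta$ by the chosen rule. (iii) $m_n^\delta:=\xi_n^\delta-\xi_{n-1}^\delta$; $\tilde\gamma_0^\delta:=0$ and for $n\ge1$, $\tilde\gamma_n^\delta:=\langle m_n^\delta,x_n^\delta-x_{n-1}^\delta\rangle-(1-\eta)\alpha_{n-1}^\delta\|r_{n-1}^\delta\|^2+(1+\eta)\alpha_{n-1}^\delta\delta\|r_{n-1}^\delta\|+\beta_{n-1}^\delta\tilde\gamma_{n-1}^\delta$. (iv) $\beta_n^\delta:=\min\{\max\{0,(\alpha_n^\delta\langle g_n^\delta,m_n^\delta\rangle-2\sigma\tilde\gamma_n^\delta)/\|m_n^\delta\|^2\},\beta\}$ if $m_n^\delta\ne0$, and $\beta_n^\delta:=0$ if $m_n^\delta=0$. (v) $\xi_{n+1}^\delta:=\xi_n^\delta-\alpha_n^\delta g_n^\delta+\beta_n^\delta m_n^\delta$, $x_{n+1}^\delta:=\nabla\mathcal R^*(\xi_{n+1}^\delta)$. *)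

From HB Require Import structures.
From mathcomp Require Import all_boot all_order all_algebra.
From mathcomp Require Import constructive_ereal reals.
Set Implicit Arguments. Unset Strict Implicit. Unset Printing Implicit Defensive.
Import Order.TTheory GRing.Theory Num.Theory.
Local Open Scope ring_scope.

Section Hilbert.
Variable R : realType.

Definition inner_product (X : lmodType R) (ip : X -> X -> R) : Prop :=
  [/\ (forall x y, ip x y = ip y x),
      (forall (a : R) x y z, ip (a *: x + y) z = (a * ip x z + ip y z)%R),
      (forall x, (0 <= ip x x)%R) &
      (forall x, ip x x = 0%R -> x = 0)].

Definition ipnorm (X : lmodType R) (ip : X -> X -> R) (x : X) : R :=
  Num.sqrt (ip x x).

Definition tends_to0 (u : nat -> R) : Prop :=
  forall e : R, (0 < e)%R -> exists N : nat, forall n, (N <= n)%N -> (`|u n| <= e)%R.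

Definition tends_to (u : nat -> R) (l : R) : Prop := tends_to0 (fun n => (u n - l)%R).

Definition complete_ip (X : lmodType R) (ip : X -> X -> R) : Prop :=
  forall u : nat -> X,
    (forall e : R, (0 < e)%R -> exists N : nat, forall m n, (N <= m)%N -> (N <= n)%N ->
        (ipnorm ip (u m - u n) <= e)%R) ->
    exists l : X, tends_to0 (fun n => ipnorm ip (u n - l)).

Definition hilbert (X : lmodType R) (ip : X -> X -> R) : Prop :=
  inner_product ip /\ complete_ip ip.

Definition weak_cvg (X : lmodType R) (ip : X -> X -> R) (u : nat -> X) (x : X) : Prop :=
  forall z, tends_to (fun n => ip (u n) z) (ip x z).

Definition domR (X : lmodType R) (f : X -> \bar R) (x : X) : Prop := (f x < +oo)%E.

Definition proper_fun (X : lmodType R) (f : X -> \bar R) : Prop :=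
  (exists x, f x \is a fin_num) /\ (forall x, f x != -oo%E).

Definition lsc (X : lmodType R) (ip : X -> X -> R) (f : X -> \bar R) : Prop :=
  forall (a : R) (u : nat -> X) (x : X),
    (forall n, (f (u n) <= a%:E)%E) -> tends_to0 (fun n => ipnorm ip (u n - x)) ->
    (f x <= a%:E)%E.

Definition strongly_convex (X : lmodType R) (ip : X -> X -> R) (f : X -> \bar R)
    (sigma : R) : Prop :=
  forall xb x : X, domR f xb -> domR f x -> forall t : R, (0 <= t <= 1)%R ->
    (f (t *: xb + (1 - t) *: x)%R + (sigma * t * (1 - t) * (ipnorm ip (xb - x)) ^+ 2)%:E
      <= (t * fine (f xb) + (1 - t) * fine (f x))%:E)%E.

Definition subdiff (X : lmodType R) (ip : X -> X -> R) (f : X -> \bar R) (x xi : X) : Prop :=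
  f x \is a fin_num /\ forall z, (f x + (ip xi (z - x))%:E <= f z)%E.

Definition bregman (X : lmodType R) (ip : X -> X -> R) (f : X -> \bar R) (xi z x : X)
  : \bar R := (f z - f x - (ip xi (z - x))%:E)%E.

(* gradRs xi is the (unique) minimizer of f - <xi, .>, i.e. grad R^*(xi) *)
Definition is_grad_conj (X : lmodType R) (ip : X -> X -> R) (f : X -> \bar R)
    (gradRs : X -> X) : Prop :=
  forall xi x, (f (gradRs xi) - (ip xi (gradRs xi))%:E <= f x - (ip xi x)%:E)%E.

Inductive step_rule := ConstantStep | AdaptiveStep.

Section Algo.
Variables (X Y : lmodType R) (ipX : X -> X -> R) (ipY : Y -> Y -> R).
Variables (F : X -> Y) (Lstar : X -> Y -> X) (gradRs : X -> X).
Variables (ydelta : Y) (delta eta sigma Lc mu0 mu1 : R) (betab : \bar R) (rule : step_rule).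

Definition alpha_of (r : Y) (g : X) : R :=
  match rule with
  | ConstantStep => (mu0 / Lc ^+ 2)%R
  | AdaptiveStep =>
      if g == 0 then mu1
      else Order.min (mu0 * (ipnorm ipY r) ^+ 2 / (ipnorm ipX g) ^+ 2)%R mu1
  end.

Definition beta_of (alpha : R) (g m : X) (gam : R) : R :=
  if m == 0 then 0%R
  else fine (@Order.min _ (\bar R)
    (Order.max 0%R ((alpha * ipX g m - 2 * sigma * gam) / (ipnorm ipX m) ^+ 2)%R)%:E
    betab).

(* state at index n : (xi_{n-1}, xi_n, gamma~_n) *)
Definition algo_step (s : X * X * R) : X * X * R :=
  let: (xip, xic, gam) := s in
  let x := gradRs xic in
  let r := F x - ydelta in
  let g := Lstar x r in
  let alpha := alpha_of r g in
  let m := xic - xip in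
  let beta := beta_of alpha g m gam in
  let xin := xic - alpha *: g + beta *: m in
  let gamn := (ipX (xin - xic) (gradRs xin - x)
               - (1 - eta) * alpha * (ipnorm ipY r) ^+ 2
               + (1 + eta) * alpha * delta * ipnorm ipY r + beta * gam)%R in
  (xic, xin, gamn).

Definition algo_state (xi0 : X) (n : nat) : X * X * R :=
  iter n algo_step (xi0, xi0, 0%R).

Definition algo_x (xi0 : X) (n : nat) : X := gradRs (algo_state xi0 n).1.2.

End Algo.
End Hilbert.

From HB Require Import structures.
From mathcomp Require Import all_boot all_order all_algebra.
From mathcomp Require Import constructive_ereal reals.
From mathcomp Require Import lra ring.
Set Implicit Arguments. Unset Strict Implicit.
Import Order.TTheory GRing.Theory Num.Theory.
Local Open Scope ring_scope.

(** The Bregman distance [D_n = D^{xi_n}(xb, x_n)] of the iterates from a solution [xb]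
   decreases by at least [c * min(mu0 / L^2, mu1) * (tau delta)^2] at every step taken
   before the discrepancy principle fires, where [c > 0] is the constant of the
   hypothesis; as [D_n >= 0], the algorithm stops after finitely many steps.
   The decrease combines the three-point identity for Bregman distances, the bound
   [D^{xi'}(x, x') <= |xi' - xi|^2 / (4 sigma)] coming from strong convexity, the
   tangential cone condition at [x_n], and the choice of [beta_n], which keeps the
   momentum term harmless through the invariant [<m_n, x_n - xb> <= gamma_n].
   Monotonicity of [D_n] and [D_0 <= sigma rho^2] keep every iterate in [B_2rho(x_0)]. *)

Section InnerProduct.
Variables (R : realType) (V : lmodType R) (ip : V -> V -> R).
Hypothesis ip_inner : inner_product ip.
Local Notation nrm := (ipnorm ip).

Lemma ipC x y : ip x y = ip y x.
Proof. by case: ip_inner => ipC _ _ _; apply: ipC. Qed.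

Lemma ip_ge0 x : 0 <= ip x x.
Proof. by case: ip_inner => _ _ ip_ge0 _; apply: ip_ge0. Qed.

Lemma ip_eq0 x : ip x x = 0 -> x = 0.
Proof. by case: ip_inner => _ _ _; apply. Qed.

Lemma ipDl x y z : ip (x + y) z = ip x z + ip y z.
Proof. by case: ip_inner => _ lin _ _; rewrite -{1}[x]scale1r lin mul1r. Qed.

Lemma ipZl a x z : ip (a *: x) z = a * ip x z.
Proof.
case: ip_inner => _ lin _ _.
have ip0 : ip 0 z = 0.
  by have := lin (-1) 0 0 z; rewrite scaleN1r addNr mulN1r addNr.
by have := lin a x 0 z; rewrite !addr0 ip0 addr0.
Qed.

Lemma ipNl x z : ip (- x) z = - ip x z.
Proof. by rewrite -scaleN1r ipZl mulN1r. Qed.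

Lemma ipBl x y z : ip (x - y) z = ip x z - ip y z.
Proof. by rewrite ipDl ipNl. Qed.

Lemma ip0l z : ip 0 z = 0.
Proof. by rewrite -(scale0r 0) ipZl mul0r. Qed.

Lemma ipDr x y z : ip z (x + y) = ip z x + ip z y.
Proof. by rewrite ipC ipDl !(ipC z). Qed.

Lemma ipZr a x z : ip z (a *: x) = a * ip z x.
Proof. by rewrite ipC ipZl ipC. Qed.

Lemma ipBr x y z : ip z (x - y) = ip z x - ip z y.
Proof. by rewrite ipC ipBl !(ipC z). Qed.

Lemma ipnorm_ge0 x : 0 <= nrm x.
Proof. exact: sqrtr_ge0. Qed.

Lemma ipnorm_sq x : nrm x ^+ 2 = ip x x.
Proof. by rewrite sqr_sqrtr // ip_ge0. Qed.

Lemma ipnorm_le x a : 0 <= a -> ip x x <= a ^+ 2 -> nrm x <= a.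
Proof. by move=> a0; rewrite -ipnorm_sq ler_sqr ?nnegrE ?ipnorm_ge0. Qed.

Lemma ipnormN x : nrm (- x) = nrm x.
Proof. by rewrite /ipnorm ipNl ipC ipNl opprK. Qed.

Lemma cauchy_schwarz_sq x y : ip x y ^+ 2 <= ip x x * ip y y.
Proof.
have [y0|y_neq0] := eqVneq (ip y y) 0.
  by rewrite (ip_eq0 y0) ipC ip0l expr0n ip0l mulr0.
have y_gt0 : 0 < ip y y by rewrite lt0r y_neq0 ip_ge0.
(* expand [0 <= ip (x - t y) (x - t y)] at the minimizing [t] *)
pose t := ip x y / ip y y.
have ty : t * ip y y = ip x y by rewrite divfK.
have := ip_ge0 (x - t *: y).
rewrite ipBl !ipBr !ipZl !ipZr (ipC y x) ty => h.
have /(ler_wpM2r (ltW y_gt0)) : t * ip x y <= ip x x by lra.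
by rewrite mulrAC ty expr2.
Qed.

Lemma cauchy_schwarz x y : `|ip x y| <= nrm x * nrm y.
Proof.
rewrite -ler_sqr ?nnegrE ?mulr_ge0 ?ipnorm_ge0 //.
by rewrite real_normK ?num_real // exprMn !ipnorm_sq cauchy_schwarz_sq.
Qed.

Lemma ip_le_norm x y : ip x y <= nrm x * nrm y.
Proof. exact: le_trans (ler_norm _) (cauchy_schwarz x y). Qed.

Lemma ip_ge_norm x y : - (nrm x * nrm y) <= ip x y.
Proof. by rewrite lerNl -ipNl -ipnormN ip_le_norm. Qed.

Lemma ipnormD x y : nrm (x + y) <= nrm x + nrm y.
Proof.
apply: ipnorm_le; first by rewrite addr_ge0 ?ipnorm_ge0.
rewrite ipDl !ipDr (ipC y x) -!ipnorm_sq.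
have := ip_le_norm x y; lra.
Qed.

Lemma ip_sub_sq_le s d v : 0 < s -> ip d v - s * ip v v <= ip d d / (4 * s).
Proof.
move=> s0; have s4 : 0 < 4 * s by rewrite mulr_gt0.
rewrite ler_pdivlMr //.
have := ip_ge0 ((2 * s) *: v - d).
rewrite !(ipBl, ipBr, ipZl, ipZr) (ipC v d).
have : 0 <= s * s by rewrite mulr_ge0 // ltW.
nra.
Qed.

Lemma ip_residual_ge eta delta r e u : 0 <= eta ->
  nrm e <= delta -> nrm u <= eta * nrm (r + e) ->
  (1 - eta) * nrm r ^+ 2 - (1 + eta) * delta * nrm r <= ip (r + e + u) r.
Proof.
move=> eta0 e_le u_le.
have r0 := ipnorm_ge0 r.
have u_le' : nrm u <= eta * (nrm r + nrm e).
  by apply: le_trans u_le _; rewrite ler_wpM2l // ipnormD.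
have := ip_ge_norm e r; have := ip_ge_norm u r.
have := ler_wpM2r r0 e_le; have := ler_wpM2r r0 u_le'.
have := ler_wpM2l eta0 (ler_wpM2r r0 e_le).
rewrite !ipDl -ipnorm_sq; nra.
Qed.

End InnerProduct.

Section Adjoint.
Variables (R : realType) (X Y : lmodType R) (ipX : X -> X -> R) (ipY : Y -> Y -> R).
Hypotheses (ipX_inner : inner_product ipX) (ipY_inner : inner_product ipY).

Lemma adjoint_norm_le (L : X -> Y) (Ls : Y -> X) c : 0 <= c ->
  (forall h k, ipY (L h) k = ipX h (Ls k)) ->
  (forall h, ipnorm ipY (L h) <= c * ipnorm ipX h) ->
  forall k, ipnorm ipX (Ls k) <= c * ipnorm ipY k.
Proof.
move=> c0 adj L_le k.
have k0 := ipnorm_ge0 ipY k.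
have [Ls0|Ls_gt0] := eqVneq (ipnorm ipX (Ls k)) 0; first by rewrite Ls0 mulr_ge0.
have Ls_pos : 0 < ipnorm ipX (Ls k) by rewrite lt0r Ls_gt0 ipnorm_ge0.
rewrite -(ler_pM2r Ls_pos) -expr2 ipnorm_sq // -adj.
apply: le_trans (ip_le_norm ipY_inner _ _) _.
by rewrite mulrAC ler_wpM2r.
Qed.

End Adjoint.

Lemma le_of_forall_mulr1B (R : realFieldType) (a b : R) :
  (forall t, 0 < t <= 1 -> a * (1 - t) <= b) -> a <= b.
Proof.
move=> scaled; apply/ler_addgt0Pr => e e0.
have ae0 : 0 < `|a| + e by rewrite ltr_wpDl.
pose t := e / (`|a| + e).
have t0 : 0 < t by rewrite divr_gt0.
have t1 : t <= 1 by rewrite ler_pdivrMr // mul1r lerDr.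
have at_le : a * t <= e.
  apply: le_trans (ler_wpM2r (ltW t0) (ler_norm a)) _.
  rewrite /t mulrA ler_pdivrMr //; nra.
have := scaled t; rewrite t0 t1 => /(_ isT); lra.
Qed.

Section Bregman.
Variables (R : realType) (X : lmodType R) (ip : X -> X -> R) (Rf : X -> \bar R) (sigma : R).
Hypotheses (ip_inner : inner_product ip) (Rf_proper : proper_fun Rf).
Hypotheses (sigma_gt0 : 0 < sigma) (Rf_convex : strongly_convex ip Rf sigma).

(* [fine] maps infinite values to [0], so this matches [bregman] only where [Rf] is finite. *)
Definition bregmanR xi z x := fine (Rf z) - fine (Rf x) - ip xi (z - x).

Lemma bregman_le_fin xi z x a : Rf x \is a fin_num ->
  (bregman ip Rf xi z x <= a%:E)%E -> Rf z \is a fin_num /\ bregmanR xi z x <= a.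
Proof.
rewrite /bregman /bregmanR => /fineK <-; have := Rf_proper.2 z.
by case: (Rf z) => [rz| |] //= _; rewrite -!EFinB lee_fin.
Qed.

Lemma subdiff_bregmanR_ge0 x xi z : subdiff ip Rf x xi -> Rf z \is a fin_num ->
  0 <= bregmanR xi z x.
Proof.
case=> /fineK fx le_Rf /fineK fz; have := le_Rf z.
by rewrite -fx -fz -EFinD lee_fin /bregmanR; lra.
Qed.

Lemma grad_conj_subdiff gradRs xi : is_grad_conj ip Rf gradRs ->
  subdiff ip Rf (gradRs xi) xi.
Proof.
move=> grad_min; have [[x1 /fineK fx1] not_ninfty] := Rf_proper.
have gfin : Rf (gradRs xi) \is a fin_num.
  have := grad_min xi x1; rewrite -fx1 -EFinB.
  by have := not_ninfty (gradRs xi); case: (Rf (gradRs xi)).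
split=> // z; move: (grad_min xi z) (not_ninfty z); rewrite -(fineK gfin).
case: (Rf z) => [rz| |] //= le_z _; last by rewrite leey.
by move: le_z; rewrite -!EFinB -EFinD !lee_fin (ipBr ip_inner); lra.
Qed.

Lemma bregmanR_ge_mul1B x xi z t : subdiff ip Rf x xi -> Rf z \is a fin_num ->
  0 < t <= 1 -> sigma * ip (z - x) (z - x) * (1 - t) <= bregmanR xi z x.
Proof.
move=> [fx le_Rf] fz /andP[t0 t1].
pose p := t *: z + (1 - t) *: x.
have := Rf_convex (xb := z) (x := x); rewrite /domR -(fineK fx) -(fineK fz) !ltry.
move=> /(_ isT isT t); rewrite (ltW t0) t1 -/p sqr_sqrtr ?ip_ge0 // => /(_ isT).
have := le_Rf p; have := Rf_proper.2 p.
case: (Rf p) => [rp| |] //= _; rewrite -!EFinD !lee_fin => le_p le_conv.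
have ip_p : ip xi (p - x) = t * ip xi (z - x).
  by rewrite /p !(ipBr ip_inner) (ipDr ip_inner) !(ipZr ip_inner); ring.
move: le_p; rewrite ip_p -(fineK fx) -EFinD lee_fin => le_p.
rewrite /bregmanR -(ler_pM2l t0); nra.
Qed.

Lemma bregmanR_ge x xi z : subdiff ip Rf x xi -> Rf z \is a fin_num ->
  sigma * ip (z - x) (z - x) <= bregmanR xi z x.
Proof. by move=> dx fz; apply: le_of_forall_mulr1B => t; apply: bregmanR_ge_mul1B. Qed.

Lemma bregmanR_three_point xi xi' z x x' :
  bregmanR xi' z x' - bregmanR xi z x = bregmanR xi' x x' - ip (xi' - xi) (z - x).
Proof. by rewrite /bregmanR !(ipBl ip_inner, ipBr ip_inner); ring. Qed.

Lemma bregmanR_le_dual x xi xi' x' : subdiff ip Rf x xi -> Rf x' \is a fin_num ->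
  bregmanR xi' x x' <= ip (xi' - xi) (xi' - xi) / (4 * sigma).
Proof.
move=> dx fx'.
have swap : bregmanR xi' x x' = ip (xi' - xi) (x' - x) - bregmanR xi x' x.
  by rewrite /bregmanR !(ipBl ip_inner, ipBr ip_inner); ring.
rewrite swap; apply: le_trans _ (ip_sub_sq_le ip_inner (xi' - xi) (x' - x) sigma_gt0).
by rewrite lerD2l lerN2 bregmanR_ge.
Qed.

Lemma subdiff_bregmanR_ball x xi z rho : subdiff ip Rf x xi -> Rf z \is a fin_num ->
  0 <= rho -> bregmanR xi z x <= sigma * rho ^+ 2 -> ipnorm ip (z - x) <= rho.
Proof.
move=> dx fz rho0 le_breg; apply: ipnorm_le => //.
by rewrite -(ler_pM2l sigma_gt0); apply: le_trans le_breg; apply: bregmanR_ge.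
Qed.

Lemma grad_conj_eq gradRs x xi : is_grad_conj ip Rf gradRs -> subdiff ip Rf x xi ->
  gradRs xi = x.
Proof.
move=> grad_min dx; have dg := grad_conj_subdiff xi grad_min.
have := bregmanR_ge dx dg.1; have := subdiff_bregmanR_ge0 dg dx.1.
have sum0 : bregmanR xi (gradRs xi) x + bregmanR xi x (gradRs xi) = 0.
  by rewrite /bregmanR !(ipBr ip_inner); ring.
move=> ge0 le_breg; apply/eqP; rewrite -subr_eq0; apply/eqP/(ip_eq0 ip_inner).
apply/le_anti; rewrite ip_ge0 // andbT -(ler_pM2l sigma_gt0) mulr0; lra.
Qed.

End Bregman.

Section Algorithm.
Variables (R : realType) (X Y : lmodType R) (ipX : X -> X -> R) (ipY : Y -> Y -> R).
Variables (Rf : X -> \bar R) (sigma : R) (F : X -> Y) (y : Y) (rho : R) (x0 xi0 xb : X).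
Variables (Lop : X -> X -> Y) (Lstar : X -> Y -> X) (eta Lc : R) (gradRs : X -> X).
Variables (ydelta : Y) (delta tau mu0 mu1 : R) (betab : \bar R) (rule : step_rule).

Local Notation nrmX := (ipnorm ipX).
Local Notation nrmY := (ipnorm ipY).
Local Notation in_ball x := (nrmX (x - x0) <= 2 * rho).
Local Notation alpha := (alpha_of ipX ipY Lc mu0 mu1 rule).
Local Notation beta := (beta_of ipX sigma betab).
Local Notation step :=
  (algo_step ipX ipY F Lstar gradRs ydelta delta eta sigma Lc mu0 mu1 betab rule).

Hypotheses (ipX_inner : inner_product ipX) (ipY_inner : inner_product ipY).
Hypotheses (Rf_proper : proper_fun Rf) (sigma_gt0 : 0 < sigma).
Hypotheses (Rf_convex : strongly_convex ipX Rf sigma) (grad_conj : is_grad_conj ipX Rf gradRs).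
Hypotheses (rho_ge0 : 0 <= rho) (F_xb : F xb = y) (Rf_xb : Rf xb \is a fin_num).
Hypothesis xb_ball : nrmX (xb - x0) <= rho.
Hypothesis Lop_le : forall x, in_ball x -> forall h, nrmY (Lop x h) <= Lc * nrmX h.
Hypothesis Lop_adj : forall x, in_ball x -> forall h k, ipY (Lop x h) k = ipX h (Lstar x k).
Hypothesis tangential_cone : forall x x', in_ball x -> in_ball x' ->
  nrmY (F x - F x' - Lop x' (x - x')) <= eta * nrmY (F x - F x').
Hypotheses (eta_ge0 : 0 <= eta) (Lc_gt0 : 0 < Lc) (delta_gt0 : 0 < delta).
Hypotheses (ydelta_near : nrmY (ydelta - y) <= delta) (tau_gt1 : 1 < tau).
Hypotheses (betab_gt0 : (0 < betab)%E) (mu0_gt0 : 0 < mu0) (mu1_gt0 : 0 < mu1).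

Definition descent_rate := 1 - (1 + eta) / tau - eta - mu0 / (4 * sigma).
Hypothesis descent_rate_gt0 : 0 < descent_rate.

Definition alpha_min := Order.min (mu0 / Lc ^+ 2) mu1.

Lemma alpha_ge0 r g : 0 <= alpha r g.
Proof.
have mu0Lc_ge0 : 0 <= mu0 / Lc ^+ 2 by rewrite divr_ge0 ?sqr_ge0 ?(ltW mu0_gt0).
rewrite /alpha_of; case: rule => //; case: ifP => _; first exact: ltW.
by rewrite le_min (ltW mu1_gt0) divr_ge0 ?(mulr_ge0 (ltW mu0_gt0)) ?sqr_ge0.
Qed.

Section AlphaBounds.
Variables (r : Y) (g : X).
Hypothesis g_le : nrmX g <= Lc * nrmY r.

Let g_sq_le : nrmX g ^+ 2 <= Lc ^+ 2 * nrmY r ^+ 2.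
Proof. by rewrite -exprMn ler_sqr ?nnegrE ?(mulr_ge0 (ltW Lc_gt0)) ?ipnorm_ge0. Qed.

Let g_norm_gt0 : g != 0 -> 0 < nrmX g ^+ 2.
Proof.
move=> g_neq0; rewrite ipnorm_sq // lt0r ip_ge0 // andbT.
by apply: contra g_neq0 => /eqP/(ip_eq0 ipX_inner)/eqP.
Qed.

Lemma alpha_mul_sq_le : alpha r g * nrmX g ^+ 2 <= mu0 * nrmY r ^+ 2.
Proof.
have Lc2_gt0 : 0 < Lc ^+ 2 by rewrite exprn_gt0.
rewrite /alpha_of; case: rule.
  apply: le_trans (ler_wpM2l _ g_sq_le) _; first by rewrite divr_ge0 ?ltW.
  by rewrite mulrA divfK ?gt_eqF.
case: ifP => [/eqP ->|/negbT g_neq0].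
  by rewrite /ipnorm ip0l // sqrtr0 expr0n mulr0 (mulr_ge0 (ltW mu0_gt0)) ?sqr_ge0.
by rewrite -ler_pdivlMr ?g_norm_gt0 // ge_min mulrA lexx.
Qed.

Lemma alpha_min_le : alpha_min <= alpha r g.
Proof.
rewrite /alpha_of /alpha_min; case: rule; first by rewrite ge_min lexx.
case: ifP => [_|/negbT/g_norm_gt0 g_gt0]; first by rewrite ge_min lexx orbT.
rewrite le_min [X in _ && X]ge_min lexx orbT andbT ge_min; apply/orP; left.
have Lc2_gt0 : 0 < Lc ^+ 2 by rewrite exprn_gt0.
rewrite ler_pdivrMr // mulrAC ler_pdivlMr // -mulrA ler_wpM2l ?(ltW mu0_gt0) //.
by rewrite mulrC.
Qed.

End AlphaBounds.

Lemma beta_ge0_le_max al g m gm :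
  m != 0 -> 0 <= beta al g m gm <= Order.max 0 ((al * ipX g m - 2 * sigma * gm) / nrmX m ^+ 2).
Proof.
rewrite /beta_of => /negPf ->; set q := _ / _.
move: betab_gt0; case: betab => [b| |] //=.
  by rewrite lte_fin -EFin_min /= => b_gt0; rewrite ge_min lexx le_min le_max lexx (ltW b_gt0).
by rewrite miney /= le_max !lexx.
Qed.

Lemma beta_ge0 al g m gm : 0 <= beta al g m gm.
Proof.
have [m0|/(beta_ge0_le_max al g gm) /andP[] //] := eqVneq m 0.
by rewrite /beta_of m0 eqxx.
Qed.

Lemma beta_sq_le al g m gm (be := beta al g m gm) :
  be * be * ipX m m <= 2 * be * (al * ipX g m - 2 * sigma * gm).
Proof.
have [m0|m_neq0] := eqVneq m 0; first by rewrite /be /beta_of m0 eqxx !(mulr0, mul0r).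
have /andP[be_ge0 be_le] := beta_ge0_le_max al g gm m_neq0; rewrite -/be in be_ge0 be_le.
set q := _ / _ in be_le.
have m_gt0 : 0 < nrmX m ^+ 2.
  rewrite ipnorm_sq // lt0r ip_ge0 // andbT.
  by apply: contra m_neq0 => /eqP/(ip_eq0 ipX_inner)/eqP.
have qm : al * ipX g m - 2 * sigma * gm = q * ipX m m.
  by rewrite -ipnorm_sq // divfK ?gt_eqF.
have be_sq_le : be * be <= be * q.
  have [q_le0|q_gt0] := leP q 0.
    move: be_le; rewrite max_l // => be_le0.
    have -> : be = 0 by apply/le_anti; rewrite be_le0 be_ge0.
    by rewrite !mul0r.
  by rewrite ler_wpM2l // -(max_r (ltW q_gt0)).
rewrite qm -ipnorm_sq //; nra.
Qed.

Definition residual xi := F (gradRs xi) - ydelta.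
Definition residual_grad xi := Lstar (gradRs xi) (residual xi).

Lemma residual_grad_le xi : in_ball (gradRs xi) ->
  nrmX (residual_grad xi) <= Lc * nrmY (residual xi).
Proof.
move=> x_ball; rewrite /residual_grad.
exact: (adjoint_norm_le ipX_inner ipY_inner (ltW Lc_gt0) (Lop_adj x_ball) (Lop_le x_ball)).
Qed.

Let xb_in_ball : in_ball xb.
Proof. by move: xb_ball rho_ge0; lra. Qed.

Lemma residual_grad_ip_ge xi : in_ball (gradRs xi) ->
  (1 - eta) * nrmY (residual xi) ^+ 2 - (1 + eta) * delta * nrmY (residual xi)
    <= ipX (residual_grad xi) (gradRs xi - xb).
Proof.
move=> x_ball; set x := gradRs xi; set r := residual xi.
set u := F xb - F x - Lop x (xb - x).
have r_e : r + (ydelta - y) = F x - y by rewrite /r /residual addrA subrK.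
have -> : ipX (residual_grad xi) (x - xb) = ipY (r + (ydelta - y) + u) r.
  have -> : r + (ydelta - y) + u = - Lop x (xb - x).
    by rewrite r_e /u F_xb !addrA subrK subrr sub0r.
  rewrite (ipNl ipY_inner) Lop_adj // (ipC ipX_inner (residual_grad xi)).
  by rewrite !(ipBl ipX_inner) opprB.
apply: ip_residual_ge => //; rewrite r_e -[F x - y]opprB (ipnormN ipY_inner) -F_xb.
exact: tangential_cone xb_in_ball x_ball.
Qed.

Definition momentum_bound (s : X * X * R) := ipX (s.1.2 - s.1.1) (gradRs s.1.2 - xb) <= s.2.

Lemma step_cross_le xi m gm al be : in_ball (gradRs xi) ->
  ipX m (gradRs xi - xb) <= gm -> 0 <= al -> 0 <= be ->
  ipX (be *: m - al *: residual_grad xi) (gradRs xi - xb) <=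
    al * ((1 + eta) * delta * nrmY (residual xi) - (1 - eta) * nrmY (residual xi) ^+ 2)
    + be * gm.
Proof.
move=> x_ball m_le al_ge0 be_ge0.
have := ler_wpM2l al_ge0 (residual_grad_ip_ge x_ball).
have := ler_wpM2l be_ge0 m_le.
rewrite (ipBl ipX_inner) !(ipZl ipX_inner); lra.
Qed.

Lemma step_sq_le xi m gm (g := residual_grad xi) (al := alpha (residual xi) g)
    (be := beta al g m gm) : in_ball (gradRs xi) ->
  ipX (be *: m - al *: g) (be *: m - al *: g) <=
    al * mu0 * nrmY (residual xi) ^+ 2 - 4 * sigma * be * gm.
Proof.
move=> x_ball.
have := ler_wpM2l (alpha_ge0 (residual xi) g) (alpha_mul_sq_le (residual_grad_le x_ball)).
have /= := beta_sq_le al g m gm.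
rewrite -/al -/be -/g ipnorm_sq // !(ipBl ipX_inner, ipBr ipX_inner, ipZl ipX_inner, ipZr ipX_inner).
rewrite (ipC ipX_inner m g); lra.
Qed.

Let subdiff_grad xi : subdiff ipX Rf (gradRs xi) xi :=
  grad_conj_subdiff ipX_inner Rf_proper xi grad_conj.

Lemma step_momentum_bound s : in_ball (gradRs s.1.2) -> momentum_bound s ->
  momentum_bound (step s).
Proof.
case: s => [[xp xc] gm]; rewrite /momentum_bound /algo_step /= => x_ball m_le.
rewrite -/(residual xc) -/(residual_grad xc).
set g := residual_grad xc; set al := alpha _ g; set be := beta al g _ gm.
have -> : xc - al *: g + be *: (xc - xp) - xc = be *: (xc - xp) - al *: g.
  by rewrite addrAC [_ - xc]addrAC subrr add0r addrC.
have := step_cross_le x_ball m_le (alpha_ge0 (residual xc) g) (beta_ge0 al g (xc - xp) gm).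
rewrite -/al -/be !(ipBr ipX_inner); lra.
Qed.

Definition breg_err xi := bregmanR ipX Rf xi xb (gradRs xi).
Definition descent_amount := descent_rate * (alpha_min * (tau * delta) ^+ 2).

Lemma alpha_min_gt0 : 0 < alpha_min.
Proof. by rewrite lt_min mu1_gt0 divr_gt0 ?exprn_gt0. Qed.

Lemma descent_amount_gt0 : 0 < descent_amount.
Proof.
by rewrite !mulr_gt0 ?alpha_min_gt0 ?exprn_gt0 ?mulr_gt0 // (lt_trans ltr01 tau_gt1).
Qed.

Lemma descent_le al nr : alpha_min <= al -> tau * delta < nr ->
  al * (mu0 / (4 * sigma) * nr ^+ 2 + (1 + eta) * delta * nr - (1 - eta) * nr ^+ 2)
    <= - descent_amount.
Proof.
move=> al_ge nr_gt.
have tau_gt0 : 0 < tau by apply: lt_trans tau_gt1.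
have td_gt0 : 0 < tau * delta by rewrite mulr_gt0.
have al_ge0 : 0 <= al by apply: le_trans al_ge; rewrite ltW // alpha_min_gt0.
set w := (1 + eta) / tau.
have w_ge0 : 0 <= w := divr_ge0 (addr_ge0 ler01 eta_ge0) (ltW tau_gt0).
have w_tau : 1 + eta = w * tau by rewrite divfK ?gt_eqF.
have inner_le : mu0 / (4 * sigma) * nr ^+ 2 + (1 + eta) * delta * nr - (1 - eta) * nr ^+ 2
    <= - descent_rate * nr ^+ 2.
  have := ler_wpM2l w_ge0 (ler_wpM2r (le_trans (ltW td_gt0) (ltW nr_gt)) (ltW nr_gt)).
  by rewrite w_tau /descent_rate -/w; nra.
have sq_le : alpha_min * (tau * delta) ^+ 2 <= al * nr ^+ 2.
  apply: ler_pM (ltW alpha_min_gt0) (sqr_ge0 _) al_ge _; nra.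
have := ler_wpM2l al_ge0 inner_le; have := ler_wpM2l (ltW descent_rate_gt0) sq_le.
rewrite /descent_amount; nra.
Qed.

Lemma step_breg_err_le s : in_ball (gradRs s.1.2) -> tau * delta < nrmY (residual s.1.2) ->
  momentum_bound s -> breg_err (step s).1.2 <= breg_err s.1.2 - descent_amount.
Proof.
case: s => [[xp xc] gm]; rewrite /momentum_bound /algo_step /= => x_ball res_gt m_le.
rewrite -/(residual xc) -/(residual_grad xc).
set g := residual_grad xc; set al := alpha _ g; set be := beta al g _ gm.
set xn := xc - al *: g + be *: (xc - xp); set d := be *: (xc - xp) - al *: g.
have d_eq : xn - xc = d by rewrite addrAC [_ - xc]addrAC subrr add0r addrC.
have three := bregmanR_three_point Rf ipX_inner xc xn xb (gradRs xc) (gradRs xn).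
have dual := bregmanR_le_dual ipX_inner Rf_proper sigma_gt0 Rf_convex xn
  (subdiff_grad xc) (subdiff_grad xn).1.
have cross := step_cross_le x_ball m_le (alpha_ge0 (residual xc) g) (beta_ge0 al g (xc - xp) gm).
have sq := step_sq_le (xc - xp) gm x_ball.
have desc := descent_le (alpha_min_le (residual_grad_le x_ball)) res_gt.
have s4_gt0 : 0 < 4 * sigma by rewrite mulr_gt0.
have inv_gt0 : 0 < (4 * sigma)^-1 by rewrite invr_gt0.
have sq4 := ler_wpM2r (ltW inv_gt0) sq.
have split4 : (al * mu0 * nrmY (residual xc) ^+ 2 - 4 * sigma * be * gm) / (4 * sigma)
    = al * (mu0 / (4 * sigma)) * nrmY (residual xc) ^+ 2 - be * gm.
  by field; rewrite gt_eqF.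
rewrite d_eq -/g -/al -/be -/d split4 in three dual cross sq4 desc.
rewrite /breg_err; rewrite !(ipBr ipX_inner) in three cross; lra.
Qed.

Lemma breg_err_ge0 xi : 0 <= breg_err xi.
Proof. exact: subdiff_bregmanR_ge0 (subdiff_grad xi) Rf_xb. Qed.

Lemma breg_err_ball xi : breg_err xi <= sigma * rho ^+ 2 -> in_ball (gradRs xi).
Proof.
move=> err_le.
have := subdiff_bregmanR_ball ipX_inner Rf_proper sigma_gt0 Rf_convex
  (subdiff_grad xi) Rf_xb rho_ge0 err_le.
have := ipnormD ipX_inner (gradRs xi - xb) (xb - x0).
by rewrite addrA subrK -[gradRs xi - xb]opprB (ipnormN ipX_inner); move: xb_ball; lra.
Qed.

Local Notation iterate n :=
  (algo_state ipX ipY F Lstar gradRs ydelta delta eta sigma Lc mu0 mu1 betab rule xi0 n).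

Hypothesis breg_err0 : breg_err xi0 <= sigma * rho ^+ 2.

Lemma iterate_descent n :
  (forall k, (k < n)%N -> tau * delta < nrmY (residual (iterate k).1.2)) ->
  breg_err (iterate n).1.2 + n%:R * descent_amount <= breg_err xi0 /\
  momentum_bound (iterate n).
Proof.
elim: n => [_|n IHn running].
  by rewrite mul0r addr0 /momentum_bound /= subrr ip0l.
have [err_le bound] := IHn (fun k lt_kn => running k (ltnW lt_kn)).
have x_ball : in_ball (gradRs (iterate n).1.2).
  apply: breg_err_ball; apply: le_trans breg_err0; apply: le_trans err_le.
  by rewrite lerDl mulr_ge0 // ltW // descent_amount_gt0.
have := step_breg_err_le x_ball (running n (ltnSn n)) bound.
split; last exact: step_momentum_bound.
by move: err_le; rewrite -natr1; lra.
Qed.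

Lemma iterate_stops : exists n, nrmY (residual (iterate n).1.2) <= tau * delta.
Proof.
pose N := (Num.truncn (breg_err xi0 / descent_amount)).+1.
have [/existsP[k stop_k]|never] :=
  boolP [exists k : 'I_N, nrmY (residual (iterate k).1.2) <= tau * delta].
  by exists k.
have running k : (k < N)%N -> tau * delta < nrmY (residual (iterate k).1.2).
  move=> lt_kN; move: never; rewrite negb_exists => /forallP /(_ (Ordinal lt_kN)).
  by rewrite -ltNge.
have [err_le _] := iterate_descent running.
have := breg_err_ge0 (iterate N).1.2.
have := truncnS_gt (breg_err xi0 / descent_amount).
rewrite ltr_pdivrMr ?descent_amount_gt0 // -/N; lra.
Qed.

Lemma iterate_first_stop : exists n,
  nrmY (residual (iterate n).1.2) <= tau * delta /\
  forall k, (k < n)%N -> tau * delta < nrmY (residual (iterate k).1.2).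
Proof.
case: (ex_minnP iterate_stops) => n stop_n first_n; exists n; split=> // k lt_kn.
by rewrite ltNge; apply/negP => /first_n; rewrite leqNgt lt_kn.
Qed.

End Algorithm.

Theorem mainTheorem3 (R : realType) (X Y : lmodType R)
  (ipX : X -> X -> R) (ipY : Y -> Y -> R)
  (Rf : X -> \bar R) (sigma : R)
  (F : X -> Y) (domF : X -> Prop) (y : Y)
  (rho : R) (x0 xi0 : X)
  (Lop : X -> X -> Y) (Lstar : X -> Y -> X) (eta Lc : R)
  (gradRs : X -> X)
  (ydelta : Y) (delta tau mu0 mu1 : R) (betab : \bar R) (rule : step_rule) :
  hilbert ipX -> hilbert ipY ->
  proper_fun Rf -> lsc ipX Rf -> 0 < sigma -> strongly_convex ipX Rf sigma ->
  is_grad_conj ipX Rf gradRs ->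
  0 < rho -> subdiff ipX Rf x0 xi0 ->
  (forall x, ipnorm ipX (x - x0) <= 2 * rho -> domF x) ->
  (exists xb, domF xb /\ F xb = y /\
     (bregman ipX Rf xi0 xb x0 <= (sigma * rho ^+ 2)%:E)%E) ->
  (forall (u : nat -> X) (x : X) (v : Y), (forall n, domF (u n)) ->
     weak_cvg ipX u x -> tends_to0 (fun n => ipnorm ipY (F (u n) - v)) ->
     domF x /\ F x = v) ->
  (forall x, ipnorm ipX (x - x0) <= 2 * rho ->
     (forall (a : R) h k, Lop x (a *: h + k) = a *: Lop x h + Lop x k) /\
     (forall h, ipnorm ipY (Lop x h) <= Lc * ipnorm ipX h) /\
     (forall h k, ipY (Lop x h) k = ipX h (Lstar x k))) ->
  (forall x, ipnorm ipX (x - x0) <= 2 * rho ->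
     forall e, 0 < e -> exists d, 0 < d /\
       forall x', ipnorm ipX (x' - x0) <= 2 * rho -> ipnorm ipX (x' - x) <= d ->
         forall h, ipnorm ipY (Lop x' h - Lop x h) <= e * ipnorm ipX h) ->
  0 <= eta < 1 ->
  (forall x xb, ipnorm ipX (x - x0) <= 2 * rho -> ipnorm ipX (xb - x0) <= 2 * rho ->
     ipnorm ipY (F x - F xb - Lop xb (x - xb)) <= eta * ipnorm ipY (F x - F xb)) ->
  0 < Lc ->
  0 < delta -> ipnorm ipY (ydelta - y) <= delta ->
  1 < tau -> (0 < betab)%E -> 0 < mu0 -> 0 < mu1 ->
  0 < 1 - (1 + eta) / tau - eta - mu0 / (4 * sigma) ->
  exists ndelta : nat,
    ipnorm ipY (F (algo_x ipX ipY F Lstar gradRs ydelta delta eta sigma Lc mu0 mu1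
                      betab rule xi0 ndelta) - ydelta) <= tau * delta /\
    forall n : nat, (n < ndelta)%N ->
      tau * delta < ipnorm ipY (F (algo_x ipX ipY F Lstar gradRs ydelta delta eta sigma
                                   Lc mu0 mu1 betab rule xi0 n) - ydelta).
Proof.
move=> [ipX_inner _] [ipY_inner _] Rf_proper _ sigma_gt0 Rf_convex grad_conj rho_gt0 dx0 _
  [xb [_ [F_xb breg_xb]]] _ Lop_props _ /andP[eta_ge0 _] cone Lc_gt0 delta_gt0 ydelta_near
  tau_gt1 betab_gt0 mu0_gt0 mu1_gt0 rate_gt0.
have [Rf_xb breg_le] := bregman_le_fin Rf_proper dx0.1 breg_xb.
have xb_ball := subdiff_bregmanR_ball ipX_inner Rf_proper sigma_gt0 Rf_convex
  dx0 Rf_xb (ltW rho_gt0) breg_le.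
have x0_eq := grad_conj_eq ipX_inner Rf_proper sigma_gt0 Rf_convex grad_conj dx0.
apply: (iterate_first_stop rule ipX_inner ipY_inner Rf_proper sigma_gt0 Rf_convex grad_conj
  (ltW rho_gt0) F_xb Rf_xb xb_ball _ _ cone eta_ge0 Lc_gt0 delta_gt0 ydelta_near tau_gt1
  betab_gt0 mu0_gt0 mu1_gt0 rate_gt0).
- by move=> x /Lop_props[_ []].
- by move=> x /Lop_props[_ []].
- by rewrite /breg_err x0_eq.
Qed.
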